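(* Let $b=3$, $c>0$ and $k\in\left(0,\frac{c}{4}\right)$. Let $\phi=\phi_k\in C^\infty(\mathbb{R})$ be the solitary wave profile of $$u_t-u_{txx}+4uu_x=3u_xu_{xx}+uu_{xxx},$$ that is, the travelling wave $u(t,x)=\phi(x-ct)$ with $\phi'(0)=0$, $\phi(x)\to k$ as $|x|\to\infty$ and $0<\phi<c$. Then the mapping $$k\mapsto Q(\phi)=\int_{\mathbb{R}}\left[3\frac{c-k}{c-\phi}-\left(\frac{c-k}{c-\phi}\right)^3-2\right]dx$$ is strictly increasing on $\left(0,\frac{c}{4}\right)$. *)

From Stdlib Require Import Reals.
From Coquelicot Require Import Coquelicot.
Open Scope R_scope.

Definition smooth (f : R -> R) : Prop := forall (n : nat) (x : R), ex_derive_n f n x.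

(* Travelling-wave equation obtained by substituting u(t,x) = phi(x - c t) into
   u_t - u_txx + 4 u u_x = 3 u_x u_xx + u u_xxx   (b = 3, Degasperis-Procesi). *)
Definition DP_tw_ode (c : R) (phi : R -> R) : Prop :=
  forall x : R,
    - c * Derive_n phi 1 x + c * Derive_n phi 3 x + 4 * phi x * Derive_n phi 1 x
    = 3 * Derive_n phi 1 x * Derive_n phi 2 x + phi x * Derive_n phi 3 x.

Definition DP_solitary_profile (c k : R) (phi : R -> R) : Prop :=
  smooth phi /\
  DP_tw_ode c phi /\
  Derive_n phi 1 0 = 0 /\
  is_lim phi p_infty k /\
  is_lim phi m_infty k /\
  (forall x : R, 0 < phi x < c) /\
  (exists x : R, phi x <> k).

Definition Q_density (c k : R) (phi : R -> R) (x : R) : R :=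
  3 * ((c - k) / (c - phi x)) - ((c - k) / (c - phi x)) ^ 3 - 2.

Definition Q_int (c k : R) (phi : R -> R) : Prop :=
  ex_RInt_gen (Q_density c k phi) (Rbar_locally m_infty) (Rbar_locally p_infty).

Definition Q (c k : R) (phi : R -> R) : R :=
  RInt_gen (Q_density c k phi) (Rbar_locally m_infty) (Rbar_locally p_infty).

From Stdlib Require Import Reals Lra Psatz.
From Coquelicot Require Import Coquelicot.
Open Scope R_scope.

(* Integrating the travelling-wave ODE twice, with the constants fixed by the decay at
   [+oo], gives [(c - phi)^2 phi'^2 = (phi - k)^2 q(c - phi)] with
   [q(y) = y^2 - 2 k y - k (c - k)]; a Gronwall argument then shows that [phi] never
   reaches [k], so [phi > k].  The function [V = - (c - phi) phi' / (phi - k)] satisfies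
   [V^2 = q(c - phi)] and tends to [+/- sigma] at [+/- oo], where
   [sigma = sqrt ((c - k) (c - 4 k))], and [W = 2 ln (c - phi - k + V) - (c - k) V / (k (c - phi))]
   is an antiderivative of the density of [Q].  Hence
   [Q(phi_k) = 2 ln ((c - 2k + sigma) / (c - 2k - sigma)) - 2 sigma / k], whose derivative
   in [k] is [(2c + k) (c - 4k) / (k^2 sigma) > 0]. *)

Lemma is_derive_continuity_pt (f : R -> R) (x l : R) :
  is_derive f x l -> continuity_pt f x.
Proof.
  intros H. apply continuity_pt_filterlim.
  apply (ex_derive_continuous (K := R_AbsRing) (V := R_NormedModule)).
  now exists l.
Qed.

Lemma Derive_eta (f : R -> R) (x l : R) :
  is_derive f x l -> Derive (fun y => f y) x = l.
Proof. apply is_derive_unique. Qed.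

Lemma MVT_is_derive (f df : R -> R) (a b : R) :
  a < b -> (forall x, a <= x <= b -> is_derive f x (df x)) ->
  exists z, a <= z <= b /\ f b - f a = df z * (b - a).
Proof.
  intros Hab Hf.
  destruct (MVT_gen f a b df) as [z [Hz E]];
    rewrite ?Rmin_left, ?Rmax_right in * by lra.
  - intros x Hx. apply Hf. lra.
  - intros x Hx. apply (is_derive_continuity_pt f x (df x)), Hf, Hx.
  - now exists z.
Qed.

Lemma is_derive_0_const (g : R -> R) :
  (forall x, is_derive g x 0) -> forall x y, g x = g y.
Proof.
  intros Hg x y.
  destruct (Rtotal_order x y) as [Hxy | [-> | Hxy]]; [| reflexivity |].
  - destruct (MVT_is_derive g (fun _ => 0) x y Hxy (fun t _ => Hg t)) as [z [_ E]]. lra.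
  - destruct (MVT_is_derive g (fun _ => 0) y x Hxy (fun t _ => Hg t)) as [z [_ E]]. lra.
Qed.

Lemma is_derive_nonneg_le (h dh : R -> R) :
  (forall x, is_derive h x (dh x)) -> (forall x, 0 <= dh x) ->
  forall x y, x <= y -> h x <= h y.
Proof.
  intros Hh Hpos x y Hxy.
  destruct (Rle_lt_or_eq_dec _ _ Hxy) as [Hlt | ->]; [| lra].
  destruct (MVT_is_derive h dh x y Hlt (fun t _ => Hh t)) as [z [_ E]].
  pose proof (Hpos z). nra.
Qed.

Lemma is_derive_pos_lt (h dh : R -> R) (a b : R) :
  a < b -> (forall x, a <= x <= b -> is_derive h x (dh x)) ->
  (forall x, a <= x <= b -> 0 < dh x) -> h a < h b.
Proof.
  intros Hab Hh Hpos.
  destruct (MVT_is_derive h dh a b Hab Hh) as [z [Hz E]].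
  pose proof (Hpos z Hz). nra.
Qed.

(* Gronwall: [|h'| <= K h] makes both [h e^(-Kx)] nonincreasing and [h e^(Kx)]
   nondecreasing, so a zero of [h] propagates in both directions. *)
Lemma gronwall_zero (h dh : R -> R) (K x0 : R) :
  (forall x, is_derive h x (dh x)) -> (forall x, Rabs (dh x) <= K * h x) ->
  h x0 = 0 -> forall x, h x = 0.
Proof.
  intros Hh Hbound H0 x.
  assert (Hdown : forall x y, x <= y -> - (h x * exp (- (K * x))) <= - (h y * exp (- (K * y)))).
  { apply (is_derive_nonneg_le _ (fun x => exp (- (K * x)) * (K * h x - dh x))).
    - intro t. auto_derive; [now exists (dh t) |].
      rewrite (Derive_eta _ _ _ (Hh t)). ring.
    - intro t. pose proof (Rle_abs (dh t)). pose proof (Rabs_maj2 (dh t)).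
      specialize (Hbound t). pose proof (exp_pos (- (K * t))). nra. }
  assert (Hup : forall x y, x <= y -> h x * exp (K * x) <= h y * exp (K * y)).
  { apply (is_derive_nonneg_le _ (fun x => exp (K * x) * (dh x + K * h x))).
    - intro t. auto_derive; [now exists (dh t) |].
      rewrite (Derive_eta _ _ _ (Hh t)). ring.
    - intro t. pose proof (Rle_abs (dh t)). pose proof (Rabs_maj2 (dh t)).
      specialize (Hbound t). pose proof (exp_pos (K * t)). nra. }
  pose proof (exp_pos (K * x)). pose proof (exp_pos (- (K * x))).
  destruct (Rle_or_lt x0 x) as [Hle | Hlt].
  - specialize (Hdown x0 x Hle). specialize (Hup x0 x Hle). rewrite H0 in *. nra.
  - specialize (Hdown x x0 (Rlt_le _ _ Hlt)). specialize (Hup x x0 (Rlt_le _ _ Hlt)).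
    rewrite H0 in *. nra.
Qed.

Lemma is_lim_p_infty_eps (f : R -> R) (l : R) :
  is_lim f p_infty l -> forall eps, 0 < eps -> exists M, forall x, M < x -> Rabs (f x - l) < eps.
Proof.
  intros H eps Heps. apply is_lim_spec in H. exact (H (mkposreal eps Heps)).
Qed.

Lemma is_derive_frequently_small (g dg : R -> R) (l : R) :
  is_lim g p_infty l -> (forall x, is_derive g x (dg x)) ->
  forall eps M, 0 < eps -> exists x, M < x /\ Rabs (dg x) < eps.
Proof.
  intros Hl Hg eps M Heps.
  destruct (is_lim_p_infty_eps g l Hl (eps / 2)) as [M' HM']; [lra |].
  set (x := Rmax M M' + 1).
  assert (Hx : M < x /\ M' < x)
    by (unfold x; pose proof (Rmax_l M M'); pose proof (Rmax_r M M'); lra).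
  destruct (MVT_is_derive g dg x (x + 1)) as [z [Hz E]]; [lra | intros; apply Hg |].
  exists z. split; [lra |].
  pose proof (HM' x ltac:(lra)) as H1. pose proof (HM' (x + 1) ltac:(lra)) as H2.
  apply Rabs_def2 in H1, H2. apply Rabs_def1; lra.
Qed.

Lemma is_lim_deriv_sqr_0 (g dg : R -> R) (l L : R) :
  is_lim g p_infty l -> (forall x, is_derive g x (dg x)) ->
  is_lim (fun x => dg x ^ 2) p_infty L -> L = 0.
Proof.
  intros Hl Hg HL.
  destruct (Req_dec L 0) as [| HL0]; [assumption | exfalso].
  pose proof (Rabs_pos_lt L HL0).
  destruct (is_lim_p_infty_eps _ L HL (Rabs L / 2)) as [M HM]; [lra |].
  destruct (is_derive_frequently_small g dg l Hl Hg (Rmin 1 (Rabs L / 2)) M) as [x [Hx Hsmall]].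
  { apply Rmin_glb_lt; lra. }
  specialize (HM x Hx). apply Rabs_def2 in HM.
  pose proof (Rmin_l 1 (Rabs L / 2)). pose proof (Rmin_r 1 (Rabs L / 2)).
  assert (dg x ^ 2 < Rabs L / 2).
  { rewrite <- pow2_abs. pose proof (Rabs_pos (dg x)). nra. }
  pose proof (pow2_ge_0 (dg x)).
  destruct (Rcase_abs L) as [Hneg | Hnn];
    [rewrite Rabs_left in * by exact Hneg | rewrite Rabs_right in * by exact Hnn]; lra.
Qed.

Lemma is_lim_0_of_sqr (f : R -> R) (x : Rbar) :
  is_lim (fun y => f y ^ 2) x 0 -> is_lim f x 0.
Proof.
  intros H. apply is_lim_spec. intros eps. apply is_lim_spec in H.
  assert (Heps2 : 0 < eps * eps) by (pose proof (cond_pos eps); nra).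
  generalize (H (mkposreal _ Heps2)). apply filter_imp. intros y Hy.
  change (Rabs (f y ^ 2 - 0) < eps * eps) in Hy. rewrite Rminus_0_r in *.
  rewrite <- (pow2_abs (f y)), Rabs_pos_eq in Hy by nra.
  pose proof (Rabs_pos (f y)). pose proof (cond_pos eps). nra.
Qed.

Lemma lt_lim_of_deriv_pos (u du : R -> R) (l M : R) :
  (forall x, is_derive u x (du x)) -> (forall x, M < x -> 0 < du x) ->
  is_lim u p_infty l -> forall x, M < x -> u x < l.
Proof.
  intros Hu Hpos Hl x Hx.
  assert (Hincr : forall y z, M < y -> y < z -> u y < u z).
  { intros y z Hy Hyz. apply (is_derive_pos_lt u du); [lra | intros; apply Hu |].
    intros t Ht. apply Hpos. lra. }
  assert (Hle : Rbar_le (u (x + 1)) l).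
  { apply (is_lim_le_loc (fun _ => u (x + 1)) u p_infty); [| apply is_lim_const | exact Hl].
    exists (x + 1). intros y Hy. apply Rlt_le, Hincr; lra. }
  simpl in Hle. pose proof (Hincr x (x + 1) Hx ltac:(lra)). lra.
Qed.

Lemma continuity_nonzero_same_sign (f : R -> R) (M : R) :
  continuity f -> (forall x, M < x -> f x <> 0) ->
  forall x y, M < x -> M < y -> 0 < f x * f y.
Proof.
  intros Hf Hnz x y Hx Hy.
  destruct (Rlt_or_le 0 (f x * f y)) as [| Hsign]; [assumption | exfalso].
  destruct (IVT_gen f x y 0 Hf) as [z [Hz Hz0]].
  { destruct (Rle_or_lt (f x) (f y));
      [rewrite Rmin_left, Rmax_right | rewrite Rmin_right, Rmax_left]; nra. }
  apply (Hnz z); [| exact Hz0].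
  destruct Hz as [Hz _]. eapply Rlt_le_trans; [| exact Hz]. now apply Rmin_glb_lt.
Qed.

Lemma is_lim_comp_opp (f : R -> R) (x : Rbar) (l : R) :
  is_lim f (Rbar_opp x) l -> is_lim (fun y => f (- y)) x l.
Proof.
  intros Hf. apply (is_lim_comp f (fun y => - y) x l (Rbar_opp x)); [exact Hf | |].
  - apply (is_lim_opp (fun y => y)), is_lim_id.
  - destruct x as [x | |]; [| exists 0; discriminate | exists 0; discriminate].
    exists (mkposreal 1 Rlt_0_1). intros y _ Hyx Heq. apply Hyx.
    injection Heq. lra.
Qed.

Lemma Rinv_of_mult_eq (a b p : R) : a * b = p -> p <> 0 -> / a = b / p.
Proof.
  intros Hab Hp. assert (a <> 0) by (intro; subst; apply Hp; ring).
  assert (b <> 0) by (intro; subst; apply Hp; ring).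
  subst. field. now split.
Qed.

Definition first_integral (c : R) (u u1 u2 : R -> R) (x : R) : R :=
  (c - u x) * u2 x - u1 x ^ 2 - c * u x + 2 * u x ^ 2.

Definition second_integral_poly (c A v : R) : R :=
  2 * A * c * v + (c ^ 2 - A) * v ^ 2 - 2 * c * v ^ 3 + v ^ 4.

Definition second_integral (c A : R) (u u1 : R -> R) (x : R) : R :=
  (c - u x) ^ 2 * u1 x ^ 2 - second_integral_poly c A (u x).

Definition wave_poly (c k y : R) : R := y ^ 2 - 2 * k * y - k * (c - k).

Section FirstIntegrals.

Variables (c k : R) (u u1 u2 u3 : R -> R).
Hypothesis Hkc : k < c.
Hypothesis Hu : forall x, is_derive u x (u1 x).
Hypothesis Hu1 : forall x, is_derive u1 x (u2 x).
Hypothesis Hu2 : forall x, is_derive u2 x (u3 x).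
Hypothesis Hode : forall x,
  - c * u1 x + c * u3 x + 4 * u x * u1 x = 3 * u1 x * u2 x + u x * u3 x.
Hypothesis Hbelow : forall x, u x < c.
Hypothesis Hlim : is_lim u p_infty k.

Lemma first_integral_const : exists A, forall x, first_integral c u u1 u2 x = A.
Proof.
  exists (first_integral c u u1 u2 0). intro x.
  apply (is_derive_0_const (first_integral c u u1 u2)). intro t.
  unfold first_integral. auto_derive.
  - repeat split; eexists; eauto.
  - rewrite (Derive_eta _ _ _ (Hu t)), (Derive_eta _ _ _ (Hu1 t)), (Derive_eta _ _ _ (Hu2 t)).
    pose proof (Hode t). nra.
Qed.

Lemma second_integral_const (A : R) :
  (forall x, first_integral c u u1 u2 x = A) ->
  exists B, forall x, second_integral c A u u1 x = B.
Proof.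
  intros HA. exists (second_integral c A u u1 0). intro x.
  apply (is_derive_0_const (second_integral c A u u1)). intro t.
  unfold second_integral, second_integral_poly. auto_derive.
  - repeat split; eexists; eauto.
  - rewrite (Derive_eta _ _ _ (Hu t)), (Derive_eta _ _ _ (Hu1 t)).
    transitivity (2 * (c - u t) * u1 t * (first_integral c u u1 u2 t - A));
      [unfold first_integral; ring | rewrite HA; ring].
Qed.

(* [u1^2] and [u2] are functions of [u], hence converge at [+oo]; but a derivative
   of a convergent function can only tend to [0]. *)
Lemma integration_constants (A B : R) :
  (forall x, first_integral c u u1 u2 x = A) -> (forall x, second_integral c A u u1 x = B) ->
  A = 2 * k ^ 2 - c * k /\ B = - second_integral_poly c A k.
Proof.
  intros HA HB.
  set (G1 := fun v => (B + second_integral_poly c A v) / (c - v) ^ 2).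
  set (G2 := fun v => (A + G1 v + c * v - 2 * v ^ 2) / (c - v)).
  assert (Hu1_sqr : forall x, u1 x ^ 2 = G1 (u x)).
  { intro x. specialize (HB x). specialize (Hbelow x).
    unfold G1. unfold second_integral in HB. field_simplify_eq; lra. }
  assert (Hu2_G2 : forall x, u2 x = G2 (u x)).
  { intro x. specialize (HA x). specialize (Hbelow x).
    unfold G2. rewrite <- Hu1_sqr. unfold first_integral in HA. field_simplify_eq; lra. }
  assert (Hu1_sqr_lim : is_lim (fun x => u1 x ^ 2) p_infty (G1 k)).
  { apply (is_lim_ext (fun x => G1 (u x))); [intro; now rewrite Hu1_sqr |].
    apply is_lim_comp_continuous; [exact Hlim |].
    apply (ex_derive_continuous (K := R_AbsRing) (V := R_NormedModule)).
    unfold G1, second_integral_poly. auto_derive. intro; nra. }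
  assert (HG1 : G1 k = 0) by exact (is_lim_deriv_sqr_0 u u1 k _ Hlim Hu Hu1_sqr_lim).
  assert (Hu1_lim : is_lim u1 p_infty 0) by (apply is_lim_0_of_sqr; now rewrite <- HG1).
  assert (HG2 : G2 k ^ 2 = 0).
  { apply (is_lim_deriv_sqr_0 u1 u2 0); [exact Hu1_lim | exact Hu1 |].
    apply (is_lim_ext (fun x => G2 (u x) ^ 2)); [intro; now rewrite Hu2_G2 |].
    apply (is_lim_comp_continuous u (fun v => G2 v ^ 2)); [exact Hlim |].
    apply (ex_derive_continuous (K := R_AbsRing) (V := R_NormedModule)).
    unfold G2, G1, second_integral_poly. auto_derive. repeat split; intro; nra. }
  unfold G2 in HG2. unfold G1 in HG1, HG2. rewrite HG1 in HG2.
  assert (Hck : c - k <> 0) by lra.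
  apply (Rmult_eq_compat_r ((c - k) ^ 2)) in HG1.
  field_simplify in HG1; [| assumption].
  assert (HA0 : (A + 0 + c * k - 2 * k ^ 2) / (c - k) = 0).
  { apply Rsqr_0_uniq. now rewrite Rsqr_pow2. }
  apply (Rmult_eq_compat_r (c - k)) in HA0. field_simplify in HA0; [| assumption].
  split; lra.
Qed.

Lemma profile_integrals :
  (forall x, (c - u x) * u2 x = u1 x ^ 2 + (u x - k) * (c - 2 * u x - 2 * k)) /\
  (forall x, (c - u x) ^ 2 * u1 x ^ 2 = (u x - k) ^ 2 * wave_poly c k (c - u x)).
Proof.
  destruct first_integral_const as [A HA].
  destruct (second_integral_const A HA) as [B HB].
  destruct (integration_constants A B HA HB) as [HA_val HB_val].
  split; intro x.
  - specialize (HA x). unfold first_integral in HA. subst A. nra.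
  - replace ((c - u x) ^ 2 * u1 x ^ 2) with (B + second_integral_poly c A (u x))
      by (rewrite <- (HB x); unfold second_integral; ring).
    subst. unfold second_integral_poly, wave_poly. ring.
Qed.

End FirstIntegrals.

Section ProfileShape.

Variables (c k : R) (u u1 : R -> R).
Hypothesis Hk : 0 < k.
Hypothesis Hk4 : k < c / 4.
Hypothesis Hu : forall x, is_derive u x (u1 x).
Hypothesis Hbounds : forall x, 0 < u x < c.
Hypothesis Hsecond : forall x,
  (c - u x) ^ 2 * u1 x ^ 2 = (u x - k) ^ 2 * wave_poly c k (c - u x).

Lemma wave_poly_nonneg x : u x <> k -> k < c - u x /\ 0 <= wave_poly c k (c - u x).
Proof.
  intros Hne. specialize (Hsecond x). specialize (Hbounds x).
  assert (Hsq : 0 < (u x - k) ^ 2) by (destruct (Rdichotomy _ _ Hne); nra).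
  assert (Hq : 0 <= wave_poly c k (c - u x)).
  { destruct (Rle_or_lt 0 (wave_poly c k (c - u x))) as [| Hneg]; [assumption |].
    pose proof (pow2_ge_0 (c - u x)). pose proof (pow2_ge_0 (u1 x)). nra. }
  split; [unfold wave_poly in Hq; nra | exact Hq].
Qed.

Lemma profile_deriv_sqr_le x : u1 x ^ 2 <= (c / k) ^ 2 * (u x - k) ^ 2.
Proof.
  pose proof (Hsecond x) as E. pose proof (Hbounds x).
  destruct (Req_dec (u x) k) as [Heq | Hne].
  - rewrite Heq in E |- *. replace ((k - k) ^ 2) with 0 in * by ring.
    assert (0 < (c - u x) ^ 2) by nra.
    pose proof (pow2_ge_0 (u1 x)). nra.
  - destruct (wave_poly_nonneg x Hne) as [Hy Hq]. unfold wave_poly in *.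
    (* [k^2 u1^2 <= (c - u)^2 u1^2 = (u - k)^2 q(c - u) <= (u - k)^2 c^2] *)
    assert (k ^ 2 * u1 x ^ 2 <= (u x - k) ^ 2 * c ^ 2).
    { apply Rle_trans with ((c - u x) ^ 2 * u1 x ^ 2).
      - apply Rmult_le_compat_r; [apply pow2_ge_0 | nra].
      - rewrite E. apply Rmult_le_compat_l; [apply pow2_ge_0 | nra]. }
    apply (Rmult_le_reg_l (k ^ 2)); [nra |].
    replace (k ^ 2 * ((c / k) ^ 2 * (u x - k) ^ 2)) with ((u x - k) ^ 2 * c ^ 2)
      by (field; lra).
    assumption.
Qed.

Lemma profile_ne_k : (exists x, u x <> k) -> forall x, u x <> k.
Proof.
  intros [x1 Hx1] x0 Hx0. apply Hx1.
  assert (Hzero : forall x, (u x - k) ^ 2 = 0).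
  { apply (gronwall_zero (fun x => (u x - k) ^ 2) (fun x => 2 * (u x - k) * u1 x)
      (1 + (c / k) ^ 2) x0).
    - intro x. auto_derive; [now exists (u1 x) |]. rewrite (Derive_eta _ _ _ (Hu x)). ring.
    - intro x. pose proof (profile_deriv_sqr_le x).
      pose proof (pow2_ge_0 (u x - k - u1 x)). pose proof (pow2_ge_0 (u x - k + u1 x)).
      apply Rabs_le. split; nra.
    - rewrite Hx0. ring. }
  specialize (Hzero x1). nra.
Qed.

Lemma profile_gt_k : u1 0 = 0 -> (forall x, u x <> k) -> forall x, k < u x.
Proof.
  intros H0 Hne.
  assert (Hk0 : k < u 0).
  { destruct (wave_poly_nonneg 0 (Hne 0)) as [Hy _].
    pose proof (Hsecond 0) as E. rewrite H0 in E. pose proof (Hbounds 0).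
    assert (0 < (u 0 - k) ^ 2) by (destruct (Rdichotomy _ _ (Hne 0)); nra).
    (* [c - u 0] is then the root [k + sqrt (k c)] of [wave_poly c k], which [k < c / 4]
       places below [c - k] *)
    assert (Hq : wave_poly c k (c - u 0) = 0) by nra.
    unfold wave_poly in Hq. nra. }
  intro x. destruct (Rle_or_lt (u x) k) as [Hle | Hlt]; [exfalso | exact Hlt].
  assert (Hcont : continuity u) by (intro z; apply (is_derive_continuity_pt u z (u1 z)), Hu).
  destruct (IVT_gen u 0 x k Hcont) as [z [_ Hz]].
  { pose proof (Rmin_r (u 0) (u x)). pose proof (Rmax_l (u 0) (u x)). lra. }
  exact (Hne z Hz).
Qed.

End ProfileShape.

Definition reduced_profile (c k : R) (u u1 u2 : R -> R) : Prop :=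
  (forall x, is_derive u x (u1 x)) /\ (forall x, is_derive u1 x (u2 x)) /\
  (forall x, k < u x < c) /\
  (forall x, (c - u x) * u2 x = u1 x ^ 2 + (u x - k) * (c - 2 * u x - 2 * k)) /\
  (forall x, (c - u x) ^ 2 * u1 x ^ 2 = (u x - k) ^ 2 * wave_poly c k (c - u x)).

Lemma reduced_profile_reflect (c k : R) (u u1 u2 : R -> R) :
  reduced_profile c k u u1 u2 ->
  reduced_profile c k (fun x => u (- x)) (fun x => - u1 (- x)) (fun x => u2 (- x)).
Proof.
  intros (Hu & Hu1 & Hbounds & Hfirst & Hsecond).
  refine (conj _ (conj _ (conj _ (conj _ _)))); intro x.
  - auto_derive; [now exists (u1 (- x)) |]. rewrite (Derive_eta _ _ _ (Hu (- x))). ring.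
  - auto_derive; [now exists (u2 (- x)) |]. rewrite (Derive_eta _ _ _ (Hu1 (- x))). ring.
  - apply Hbounds.
  - rewrite Hfirst. ring.
  - rewrite <- Hsecond. ring.
Qed.

Definition Vfun (c k : R) (u u1 : R -> R) (x : R) : R := - (c - u x) * u1 x / (u x - k).

Definition Wval (c k a v : R) : R := 2 * ln (c - a - k + v) - (c - k) / k * v / (c - a).

Definition sigma (c k : R) : R := sqrt ((c - k) * (c - 4 * k)).

Lemma sigma_spec (c k : R) : 0 < k -> k < c / 4 ->
  0 < sigma c k /\ sigma c k ^ 2 = (c - k) * (c - 4 * k) /\ sigma c k < c - 2 * k.
Proof.
  intros Hk Hk4. unfold sigma.
  assert (Hpos : 0 < (c - k) * (c - 4 * k)) by nra.
  pose proof (sqrt_lt_R0 _ Hpos). pose proof (sqrt_sqrt _ (Rlt_le _ _ Hpos)).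
  repeat split; nra.
Qed.

Lemma Q_density_chain_rule (c k a v : R) :
  0 < k -> a < c -> c - a - k + v <> 0 -> v ^ 2 = wave_poly c k (c - a) ->
  2 * (- (- v * (a - k) / (c - a)) + (c - a - k) * (a - k) / (c - a)) / (c - a - k + v)
  - (c - k) / k * ((c - a - k) * (a - k) / (c - a) * (c - a)
                   + v * (- v * (a - k) / (c - a))) / (c - a) ^ 2
  = 3 * ((c - k) / (c - a)) - ((c - k) / (c - a)) ^ 3 - 2.
Proof.
  intros Hk Ha Hlog Hv.
  replace (v * (- v * (a - k) / (c - a))) with (- v ^ 2 * (a - k) / (c - a)) by (field; lra).
  rewrite Hv. unfold wave_poly. field. lra.
Qed.

Section Antiderivative.

Variables (c k : R) (u u1 u2 : R -> R).
Hypothesis Hk : 0 < k.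
Hypothesis Hk4 : k < c / 4.
Hypothesis Hprof : reduced_profile c k u u1 u2.

Lemma Vfun_sqr x : Vfun c k u u1 x ^ 2 = wave_poly c k (c - u x).
Proof.
  destruct Hprof as (_ & _ & Hbounds & _ & Hsecond). specialize (Hbounds x).
  apply (Rmult_eq_reg_l ((u x - k) ^ 2)); [| nra].
  rewrite <- Hsecond. unfold Vfun. field. lra.
Qed.

Lemma u1_Vfun x : u1 x = - Vfun c k u u1 x * (u x - k) / (c - u x).
Proof.
  destruct Hprof as (_ & _ & Hbounds & _ & _). specialize (Hbounds x).
  unfold Vfun. field. lra.
Qed.

Lemma Vfun_derive x :
  is_derive (Vfun c k u u1) x ((c - u x - k) * (u x - k) / (c - u x)).
Proof.
  destruct Hprof as (Hu & Hu1 & Hbounds & Hfirst & Hsecond). specialize (Hbounds x).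
  unfold Vfun. auto_derive.
  - repeat split; [now exists (u1 x) | now exists (u2 x) | now exists (u1 x) | lra].
  - rewrite (Derive_eta _ _ _ (Hu x)), (Derive_eta _ _ _ (Hu1 x)).
    assert (Hu2 : u2 x = (u1 x ^ 2 + (u x - k) * (c - 2 * u x - 2 * k)) / (c - u x))
      by (rewrite <- Hfirst; field; lra).
    assert (Hu1_sqr : u1 x ^ 2 = (u x - k) ^ 2 * wave_poly c k (c - u x) / (c - u x) ^ 2)
      by (rewrite <- Hsecond; field; lra).
    rewrite Hu2.
    transitivity (- (c - 2 * u x - 2 * k) + (c - u x) * u1 x ^ 2 / (u x - k) ^ 2);
      [field; lra | rewrite Hu1_sqr; unfold wave_poly; field; lra].
Qed.

Lemma Wval_log_arg_pos x : 0 < c - u x - k + Vfun c k u u1 x.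
Proof.
  destruct Hprof as (_ & _ & Hbounds & _ & Hsecond).
  assert (Hbounds0 : forall x, 0 < u x < c) by (intro t; specialize (Hbounds t); lra).
  destruct (wave_poly_nonneg c k u u1 Hk Hk4 Hbounds0 Hsecond x) as [Hy _];
    [specialize (Hbounds x); lra |].
  pose proof (Vfun_sqr x) as HV. unfold wave_poly in HV.
  (* the two factors below have product [k c > 0] and their sum is positive *)
  assert ((c - u x - k + Vfun c k u u1 x) * (c - u x - k - Vfun c k u u1 x) = k * c) by nra.
  specialize (Hbounds x). nra.
Qed.

Lemma Wval_Vfun_derive x :
  is_derive (fun y => Wval c k (u y) (Vfun c k u u1 y)) x (Q_density c k u x).
Proof.
  destruct Hprof as (Hu & _ & Hbounds & _ & _). specialize (Hbounds x).
  pose proof (Wval_log_arg_pos x) as Hlog.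
  set (V := Vfun c k u u1) in *.
  set (dV := (c - u x - k) * (u x - k) / (c - u x)).
  assert (Hraw : is_derive (fun y => Wval c k (u y) (V y)) x
    (2 * (- u1 x + dV) / (c - u x - k + V x)
     - (c - k) / k * (dV * (c - u x) + V x * u1 x) / (c - u x) ^ 2)).
  { unfold Wval. auto_derive.
    - repeat split; first [lra | eexists; apply Hu | eexists; apply Vfun_derive].
    - rewrite (Derive_eta _ _ _ (Hu x)), (Derive_eta V _ _ (Vfun_derive x)).
      unfold dV. field. lra. }
  rewrite u1_Vfun in Hraw. fold V in Hraw. unfold dV in Hraw.
  unfold Q_density. rewrite <- (Q_density_chain_rule c k (u x) (V x));
    [exact Hraw | lra .. | apply Vfun_sqr].
Qed.

Lemma Vfun_lim_p_infty :
  is_lim u p_infty k -> is_lim (Vfun c k u u1) p_infty (sigma c k).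
Proof.
  intros Hlim. destruct Hprof as (Hu & _ & Hbounds & _ & _).
  destruct (sigma_spec c k Hk Hk4) as (Hs & Hs2 & _).
  set (V := Vfun c k u u1).
  assert (Hsqr_lim : is_lim (fun x => V x ^ 2) p_infty (sigma c k ^ 2)).
  { apply (is_lim_ext (fun x => wave_poly c k (c - u x))); [intro; symmetry; apply Vfun_sqr |].
    replace (sigma c k ^ 2) with (wave_poly c k (c - k)) by (rewrite Hs2; unfold wave_poly; ring).
    apply (is_lim_comp_continuous u (fun a => wave_poly c k (c - a))); [exact Hlim |].
    apply (ex_derive_continuous (K := R_AbsRing) (V := R_NormedModule)).
    unfold wave_poly. auto_derive. exact I. }
  destruct (is_lim_p_infty_eps _ _ Hsqr_lim (sigma c k ^ 2 / 2)) as [M HM]; [nra |].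
  assert (Hnz : forall x, M < x -> V x <> 0).
  { intros x Hx H0. specialize (HM x Hx). rewrite H0 in HM. apply Rabs_def2 in HM. nra. }
  assert (Hcont : continuity V).
  { intro x. apply (is_derive_continuity_pt _ _ _ (Vfun_derive x)). }
  assert (Hsign : forall x, M < x -> 0 < V x * V (M + 1)).
  { intros x Hx. apply (continuity_nonzero_same_sign V M); [assumption .. | lra]. }
  assert (HV1 : 0 < V (M + 1)).
  { destruct (Rlt_or_le 0 (V (M + 1))) as [| Hneg]; [assumption | exfalso].
    (* otherwise [u' > 0] near [+oo], and [u] could only reach its limit [k] from below *)
    assert (Hincr : forall x, M < x -> 0 < u1 x).
    { intros x Hx. specialize (Hsign x Hx). specialize (Hbounds x).
      rewrite u1_Vfun. fold V. apply Rdiv_lt_0_compat; nra. }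
    pose proof (lt_lim_of_deriv_pos u u1 k M Hu Hincr Hlim (M + 1) ltac:(lra)).
    specialize (Hbounds (M + 1)). lra. }
  apply (is_lim_ext_loc (fun x => sqrt (V x ^ 2))).
  { exists M. intros x Hx. apply sqrt_pow2. specialize (Hsign x Hx). nra. }
  rewrite <- (sqrt_pow2 (sigma c k)) by lra.
  apply (is_lim_comp_continuous (fun x => V x ^ 2) sqrt); [exact Hsqr_lim | apply continuous_sqrt].
Qed.

End Antiderivative.


Lemma Vfun_lim_m_infty (c k : R) (u u1 u2 : R -> R) :
  0 < k -> k < c / 4 -> reduced_profile c k u u1 u2 ->
  is_lim u m_infty k -> is_lim (Vfun c k u u1) m_infty (- sigma c k).
Proof.
  intros Hk Hk4 Hprof Hlim.
  pose proof (Vfun_lim_p_infty c k _ _ _ Hk Hk4 (reduced_profile_reflect c k u u1 u2 Hprof)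
    (is_lim_comp_opp u p_infty k Hlim)) as Hrefl.
  apply (is_lim_ext (fun y => - Vfun c k (fun x => u (- x)) (fun x => - u1 (- x)) (- y))).
  { intro y. unfold Vfun, Rdiv. rewrite Ropp_involutive. ring. }
  exact (is_lim_opp _ m_infty (sigma c k) (is_lim_comp_opp _ m_infty _ Hrefl)).
Qed.

Lemma is_lim_Wval (c k a s : R) (u v : R -> R) (x : Rbar) :
  0 < c - a - k + s -> c - a <> 0 -> is_lim u x a -> is_lim v x s ->
  is_lim (fun y => Wval c k (u y) (v y)) x (Wval c k a s).
Proof.
  intros Hlog Hca Hu Hv. unfold Wval.
  assert (Hsum : is_lim (fun y => c - u y - k + v y) x (c - a - k + s)).
  { apply is_lim_plus'; [apply is_lim_minus'; [apply is_lim_minus' |] |]; auto using is_lim_const. }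
  apply is_lim_minus'.
  - apply (is_lim_scal_l (fun y => ln (c - u y - k + v y)) 2 x (ln (c - a - k + s))).
    apply (is_lim_comp_continuous _ ln); [exact Hsum | now apply continuous_ln].
  - replace (Finite ((c - k) / k * s / (c - a))) with (Rbar_div ((c - k) / k * s) (c - a))
      by reflexivity.
    apply (is_lim_div (fun y => (c - k) / k * v y) (fun y => c - u y) x).
    + exact (is_lim_scal_l v ((c - k) / k) x s Hv).
    + apply is_lim_minus'; [apply is_lim_const | exact Hu].
    + simpl. congruence.
    + exact I.
Qed.

Definition Q_closed_form (c k : R) : R :=
  2 * ln (c - 2 * k + sigma c k) - 2 * ln (c - 2 * k - sigma c k) - 2 * sigma c k / k.

Lemma Wval_sigma_sub (c k : R) : 0 < k -> k < c / 4 ->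
  Wval c k k (sigma c k) - Wval c k k (- sigma c k) = Q_closed_form c k.
Proof.
  intros Hk Hk4. unfold Wval, Q_closed_form.
  replace (c - k - k + sigma c k) with (c - 2 * k + sigma c k) by ring.
  replace (c - k - k + - sigma c k) with (c - 2 * k - sigma c k) by ring.
  field. lra.
Qed.

Lemma solitary_profile_reduced (c k : R) (phi : R -> R) :
  0 < k -> k < c / 4 -> DP_solitary_profile c k phi ->
  reduced_profile c k phi (Derive_n phi 1) (Derive_n phi 2).
Proof.
  intros Hk Hk4 (Hsmooth & Hode & Hcrit & Hlim & _ & Hbounds & Hnonconst).
  assert (Hder : forall n x, is_derive (Derive_n phi n) x (Derive_n phi (S n) x)).
  { intros n x. exact (Derive_correct _ x (Hsmooth (S n) x)). }
  destruct (profile_integrals c k phi (Derive_n phi 1) (Derive_n phi 2) (Derive_n phi 3))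
    as [Hfirst Hsecond]; [lra | apply Hder .. | exact Hode | intro; apply Hbounds | exact Hlim |].
  pose proof (profile_ne_k c k phi _ Hk Hk4 (Hder 0%nat) Hbounds Hsecond Hnonconst) as Hne.
  pose proof (profile_gt_k c k phi _ Hk Hk4 (Hder 0%nat) Hbounds Hsecond Hcrit Hne) as Hgt.
  split; [apply Hder | split; [apply Hder | split; [| now split]]].
  intro x. split; [apply Hgt | apply Hbounds].
Qed.

Lemma profile_is_RInt_gen (c k : R) (phi : R -> R) :
  0 < k -> k < c / 4 -> DP_solitary_profile c k phi ->
  is_RInt_gen (Q_density c k phi) (Rbar_locally m_infty) (Rbar_locally p_infty) (Q_closed_form c k).
Proof.
  intros Hk Hk4 Hphi.
  pose proof (solitary_profile_reduced c k phi Hk Hk4 Hphi) as Hprof.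
  destruct Hphi as (_ & _ & _ & Hlim_p & Hlim_m & Hbounds & _).
  destruct (sigma_spec c k Hk Hk4) as (Hs & _ & Hs_lt).
  set (W := fun y => Wval c k (phi y) (Vfun c k phi (Derive_n phi 1) y)).
  assert (HW : forall x, is_derive W x (Q_density c k phi x))
    by (intro x; exact (Wval_Vfun_derive c k phi _ _ Hk Hk4 Hprof x)).
  rewrite <- Wval_sigma_sub by assumption.
  apply (is_RInt_gen_ext (Derive W)).
  { apply filter_forall. intros _ x _. apply is_derive_unique, HW. }
  apply is_RInt_gen_Derive.
  - apply filter_forall. intros _ x _. now exists (Q_density c k phi x).
  - apply filter_forall. intros _ x _.
    apply (continuous_ext (Q_density c k phi)); [intro t; symmetry; apply is_derive_unique, HW |].
    apply (ex_derive_continuous (K := R_AbsRing) (V := R_NormedModule)).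
    destruct Hprof as (Hu & _).
    unfold Q_density. auto_derive.
    repeat split; first [now exists (Derive_n phi 1 x) | specialize (Hbounds x); lra].
  - refine (is_lim_Wval c k k (- sigma c k) phi _ m_infty _ _ Hlim_m
      (Vfun_lim_m_infty c k phi _ _ Hk Hk4 Hprof Hlim_m)); lra.
  - refine (is_lim_Wval c k k (sigma c k) phi _ p_infty _ _ Hlim_p
      (Vfun_lim_p_infty c k phi _ _ Hk Hk4 Hprof Hlim_p)); lra.
Qed.



Lemma Q_closed_form_derive (c k : R) : 0 < k -> k < c / 4 ->
  is_derive (Q_closed_form c) k ((2 * c + k) * (c - 4 * k) / (k ^ 2 * sigma c k)).
Proof.
  intros Hk Hk4. destruct (sigma_spec c k Hk Hk4) as (Hs & Hs2 & Hs_lt).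
  unfold Q_closed_form, sigma. auto_derive.
  - change (sqrt ((c + - k) * (c + - (4 * k)))) with (sigma c k).
    repeat split; try lra; nra.
  - change (sqrt ((c + - k) * (c + - (4 * k)))) with (sigma c k).
    set (S := sigma c k) in *. change (sqrt ((c - k) * (c - 4 * k))) with S.
    assert (Hkc : 0 < k * c) by nra.
    (* [(c - 2k + S) (c - 2k - S) = k c] rationalizes both logarithmic derivatives *)
    rewrite (Rinv_of_mult_eq (c + - (2 * k) + S) (c - 2 * k - S) (k * c)) by (nra || lra).
    rewrite (Rinv_of_mult_eq (c + - (2 * k) + - S) (c - 2 * k + S) (k * c)) by (nra || lra).
    field_simplify_eq; [| repeat split; lra].
    replace (S ^ 2) with ((c - k) * (c - 4 * k)) by (rewrite <- Hs2; ring). ring.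
Qed.

Lemma Q_closed_form_increasing (c k1 k2 : R) :
  0 < k1 -> k1 < k2 -> k2 < c / 4 -> Q_closed_form c k1 < Q_closed_form c k2.
Proof.
  intros Hk1 H12 Hk2.
  apply (is_derive_pos_lt (Q_closed_form c)
    (fun k => (2 * c + k) * (c - 4 * k) / (k ^ 2 * sigma c k)));
    [assumption | intros k Hk; apply Q_closed_form_derive; lra |].
  intros k Hk. destruct (sigma_spec c k ltac:(lra) ltac:(lra)) as (Hs & _).
  apply Rdiv_lt_0_compat; [nra |]. apply Rmult_lt_0_compat; [nra | exact Hs].
Qed.

Theorem lemma5p2 (c k1 k2 : R) (phi1 phi2 : R -> R) :
  0 < c ->
  0 < k1 -> k1 < k2 -> k2 < c / 4 ->
  DP_solitary_profile c k1 phi1 ->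
  DP_solitary_profile c k2 phi2 ->
  Q_int c k1 phi1 /\ Q_int c k2 phi2 /\ Q c k1 phi1 < Q c k2 phi2.
Proof.
  intros _ Hk1 H12 Hk2 Hphi1 Hphi2.
  pose proof (profile_is_RInt_gen c k1 phi1 Hk1 ltac:(lra) Hphi1) as HQ1.
  pose proof (profile_is_RInt_gen c k2 phi2 ltac:(lra) Hk2 Hphi2) as HQ2.
  split; [now exists (Q_closed_form c k1) |].
  split; [now exists (Q_closed_form c k2) |].
  unfold Q. rewrite (is_RInt_gen_unique _ _ HQ1), (is_RInt_gen_unique _ _ HQ2).
  now apply Q_closed_form_increasing.
Qed.
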